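(* Let $\mathbf{F}_{25} = \mathbf{F}_5(\omega)$ with $\omega^2 = 2$, and let $\ell$ be an odd prime with $\ell \neq 5$. Define $\alpha, \beta \colon \mathbf{F}_{25}^{\boxtimes} \to \mathbf{Z}/\ell$ by $\alpha(1) = \alpha(3) = \alpha(\omega+1) = 1$, $\alpha(3\omega+3) = \alpha(4\omega+1) = \alpha(2\omega+3) = 0$, $\beta(1) = \beta(3) = \beta(3\omega+3) = 0$, $\beta(\omega+1) = \beta(4\omega+1) = \beta(2\omega+3) = 1$, and extended to the remaining six nonzero squares by $\alpha(-s) = -\alpha(s)$, $\beta(-s) = -\beta(s)$. Then $\alpha, \beta$ are voltage assignments, the covers $X^\alpha$ and $X^\beta$ of the Paley graph $X(\mathbf{F}_{25})$ have the same adjacency spectrum (as multisets), and $X^\alpha$ and $X^\beta$ are not isomorphic as graphs.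
   Context: $\mathbf{F}_{25}^{\boxtimes}$ is the set of nonzero squares in $\mathbf{F}_{25}$; it is the union of the $\mathbf{F}_5^\times$-orbits of $1$, $\omega+1$ and $4\omega+1$, and the listed six elements together with their negatives are exactly these $12$ squares. For a prime $\ell \neq 5$, a voltage assignment is a function $\alpha \colon \mathbf{F}_{25}^{\boxtimes} \to \mathbf{Z}/\ell$, not identically zero, with $\alpha(-s) = -\alpha(s)$. The graph $X^\alpha$ has vertex set $\mathbf{F}_{25} \times \mathbf{Z}/\ell$, with $(x,i)$ adjacent to $(y,j)$ iff $y - x \in \mathbf{F}_{25}^{\boxtimes}$ and $j - i = \alpha(y - x)$. Its adjacency spectrum is the multiset of eigenvalues of its adjacency matrix. *)

From HB Require Import structures.
From mathcomp Require Import all_boot all_order all_algebra all_field.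
Set Implicit Arguments. Unset Strict Implicit. Unset Printing Implicit Defensive.
Import Order.TTheory GRing.Theory Num.Theory.
Local Open Scope ring_scope.

(* F_25 = F_5(omega), omega^2 = 2; the pair (a, b) represents a + b*omega. *)
Definition F25 : finType := ('F_5 * 'F_5)%type.

Definition f25 (a b : nat) : F25 := (a%:R, b%:R).
Definition f25add (x y : F25) : F25 := (x.1 + y.1, x.2 + y.2).
Definition f25opp (x : F25) : F25 := (- x.1, - x.2).
Definition f25sub (x y : F25) : F25 := f25add x (f25opp y).
Definition f25zero : F25 := (0, 0).
(* (a + b w)(c + d w) = (ac + 2bd) + (ad + bc) w *)
Definition f25mul (x y : F25) : F25 :=
  (x.1 * y.1 + 2%:R * (x.2 * y.2), x.1 * y.2 + x.2 * y.1).

Definition sqF25 : {set F25} :=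
  [set s | (s != f25zero) && [exists t : F25, f25mul t t == s]].

(* A voltage assignment: a function on the nonzero squares (values elsewhere
   are irrelevant), not identically zero, with alpha(-s) = -alpha(s). *)
Definition voltage (l : nat) (a : F25 -> 'Z_l) : Prop :=
  (exists2 s, s \in sqF25 & a s != 0) /\
  (forall s, s \in sqF25 -> a (f25opp s) = - a s).

Definition extend_odd (l : nat) (vals : seq (F25 * nat)) (s : F25) : 'Z_l :=
  match [seq p <- vals | p.1 == s] with
  | p :: _ => (p.2)%:R
  | [::] =>
    match [seq p <- vals | p.1 == f25opp s] with
    | p :: _ => - (p.2)%:R
    | [::] => 0
    end
  end.

Definition alpha_vals : seq (F25 * nat) :=
  [:: (f25 1 0, 1%N); (f25 3 0, 1%N); (f25 1 1, 1%N);
      (f25 3 3, 0%N); (f25 1 4, 0%N); (f25 3 2, 0%N)].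
Definition beta_vals : seq (F25 * nat) :=
  [:: (f25 1 0, 0%N); (f25 3 0, 0%N); (f25 3 3, 0%N);
      (f25 1 1, 1%N); (f25 1 4, 1%N); (f25 3 2, 1%N)].

Definition alpha25 (l : nat) : F25 -> 'Z_l := extend_odd l alpha_vals.
Definition beta25 (l : nat) : F25 -> 'Z_l := extend_odd l beta_vals.

Definition cover_vertex (l : nat) : finType := (F25 * 'Z_l)%type.

Definition cover_adj (l : nat) (a : F25 -> 'Z_l) (u v : cover_vertex l) : bool :=
  (f25sub v.1 u.1 \in sqF25) && (v.2 - u.2 == a (f25sub v.1 u.1)).

Definition adj_matrix (l : nat) (a : F25 -> 'Z_l) : 'M[algC]_(#|cover_vertex l|) :=
  \matrix_(i, j) (cover_adj a (enum_val i) (enum_val j))%:R.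

Definition spec_mult (l : nat) (a : F25 -> 'Z_l) (lam : algC) : nat :=
  mup lam (char_poly (adj_matrix a)).

Definition same_spectrum (l : nat) (a b : F25 -> 'Z_l) : Prop :=
  forall lam : algC, spec_mult a lam = spec_mult b lam.

Definition graph_iso (l : nat) (a b : F25 -> 'Z_l) : Prop :=
  exists f : cover_vertex l -> cover_vertex l,
    bijective f /\ forall u v, cover_adj a u v = cover_adj b (f u) (f v).

From mathcomp Require Import all_boot all_order all_algebra all_field.
From mathcomp Require Import ring zify.
Set Implicit Arguments. Unset Strict Implicit. Unset Printing Implicit Defensive.
Import Order.TTheory GRing.Theory Num.Theory.
Local Open Scope ring_scope.

(* Both covers are Cayley graphs of F25 × Z/l, with connection set
   {(s, γ s) | s a nonzero square} for γ = α, β.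

   Spectrum: an integer matrix M on F25, found by computer, satisfies
   M A_k^α = A_k^β M for each voltage value k ∈ {-1, 0, 1}, where A_k^γ is the
   Cayley matrix of the squares s with γ s = k, and N M = 25 for a second
   integer matrix N.  Hence M ⊗ I intertwines the adjacency matrices of X^α
   and X^β and is invertible, so both have the same characteristic polynomial.

   Non-isomorphism: count the 4-cycles through an edge.  The count depends only
   on the direction of the edge and, for l > 4, only on the integer voltages,
   since the voltage sum around a 4-cycle is at most 4 in absolute value.
   Every edge of X^α whose direction is not in F_5 lies on at least 17
   4-cycles, whereas the edges of X^β along (ω + 1, 1) and (2ω + 3, 1) lie on
   at most 16.  An isomorphism X^β → X^α therefore maps these edges to edges
   with direction in F_5, which fix the ω-coordinate; as the two translations
   generate F25 × Z/l for l ≠ 5, the ω-coordinate of the image would be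
   constant, although the isomorphism is onto.  For l = 3, some edge of X^α
   lies on 24 4-cycles and no edge of X^β on more than 23. *)

Definition four_cycles (T : finType) (e : rel T) (u v : T) : {set T * T} :=
  [set xy | [&& e v xy.1, e xy.1 xy.2, e xy.2 u, xy.1 != u & xy.2 != v]].

Lemma leq_card_four_cycles (T T' : finType) (e : rel T) (e' : rel T') (f : T -> T') u v :
  injective f -> (forall x y, e x y = e' (f x) (f y)) ->
  (#|four_cycles e u v| <= #|four_cycles e' (f u) (f v)|)%N.
Proof.
move=> f_inj fE.
have fxf_inj : injective (fun xy : T * T => (f xy.1, f xy.2)).
  by move=> [x y] [x' y'] [/f_inj -> /f_inj ->].
rewrite -(card_imset _ fxf_inj); apply/subset_leq_card/subsetP => _ /imsetP[xy xyP ->].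
by move: xyP; rewrite !inE /= -!fE !(inj_eq f_inj).
Qed.

Lemma char_poly_similar (R : idomainType) n (P A B : 'M[R]_n) :
  \det P != 0 -> P *m A = B *m P -> char_poly A = char_poly B.
Proof.
move=> detP_neq0 PA_BP; pose Px := map_mx polyC P.
have PxE : Px *m char_poly_mx A = char_poly_mx B *m Px.
  rewrite /char_poly_mx mulmxBr mulmxBl -scalar_mxC; congr (_ - _).
  by rewrite /Px -!map_mxM PA_BP.
have := congr1 determinant PxE; rewrite !det_mulmx /Px det_map_mx.
by rewrite [_ * polyC _]mulrC => /mulfI; apply; rewrite polyC_eq0.
Qed.

Definition fun_mx (R : nzRingType) (T : finType) (F : T -> T -> R) : 'M[R]_#|T| :=
  \matrix_(i, j) F (enum_val i) (enum_val j).

Lemma eq_fun_mx (R : nzRingType) (T : finType) (F G : T -> T -> R) :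
  (forall x y, F x y = G x y) -> fun_mx F = fun_mx G.
Proof. by move=> FG; apply/matrixP => i j; rewrite !mxE FG. Qed.

Lemma fun_mxM (R : nzRingType) (T : finType) (F G : T -> T -> R) :
  fun_mx F *m fun_mx G = fun_mx (fun x z => \sum_y F x y * G y z).
Proof.
apply/matrixP => i j; rewrite !mxE.
transitivity (\sum_(k < #|T|) F (enum_val i) (enum_val k) * G (enum_val k) (enum_val j)).
  by apply: eq_bigr => k _; rewrite !mxE.
by rewrite -(big_enum_val (fun y => F (enum_val i) y * G y (enum_val j))).
Qed.

Lemma sum_pred1 (R : nzRingType) (I : finType) (j : I) (G : I -> R) :
  \sum_i (j == i)%:R * G i = G j.
Proof.
rewrite (bigD1 j) //= eqxx mul1r big1 ?addr0 // => i.
by rewrite eq_sym => /negbTE ->; rewrite mul0r.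
Qed.

Lemma f25oppE (x : F25) : f25opp x = - x. Proof. by []. Qed.

Definition F25s : seq F25 := [seq f25 i j | i <- iota 0 5, j <- iota 0 5].

Lemma uniq_F25s : uniq F25s. Proof. by vm_compute. Qed.

Lemma mem_F25s (x : F25) : x \in F25s.
Proof.
have natF5 (c : 'F_5) : c = (val c)%:R.
  by apply/val_inj; rewrite /= val_Fp_nat // modn_small.
case: x => a b; apply/allpairsP; exists (val a, val b).
by rewrite !mem_iota /= !ltn_ord /f25 -!natF5.
Qed.

Lemma all_F25s (P : pred F25) : all P F25s -> forall x, P x.
Proof. by move/allP=> allP x; apply: allP; apply: mem_F25s. Qed.

Lemma big_F25s (R : nmodType) (F : F25 -> R) :
  \sum_(x : F25) F x = \sum_(x <- F25s) F x.
Proof.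
apply: perm_big; apply: uniq_perm; rewrite ?index_enum_uniq ?uniq_F25s //.
by move=> x; rewrite mem_index_enum mem_F25s.
Qed.

Lemma card_F25_pairs (A : {set F25 * F25}) :
  #|A| = count (mem A) [seq (x, y) | x <- F25s, y <- F25s].
Proof.
set s := [seq _ | x <- _, y <- _].
have uniq_s : uniq s by rewrite allpairs_uniq ?uniq_F25s // => -[] ? ? [] ? ?.
have mem_s p : p \in s by case: p => x y; apply: allpairs_f; apply: mem_F25s.
rewrite -size_filter.
have /card_uniqP <- : uniq [seq p <- s | p \in A] := filter_uniq _ uniq_s.
by apply: eq_card => p; rewrite mem_filter mem_s andbT.
Qed.

(* Unlike [exists], which goes through the locked cardinal, [has] computes. *)
Definition is_square (x : F25) : bool :=
  (x != 0) && has (fun t => f25mul t t == x) F25s.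

Lemma is_squareE (x : F25) : (x \in sqF25) = is_square x.
Proof.
rewrite inE /is_square; congr (_ && _).
by apply/existsP/hasP => [[t]|[t _]]; exists t; rewrite ?mem_F25s.
Qed.

Definition extend_odd_int (vals : seq (F25 * nat)) (s : F25) : int :=
  match [seq p <- vals | p.1 == s] with
  | p :: _ => p.2%:Z
  | [::] =>
    match [seq p <- vals | p.1 == - s] with
    | p :: _ => - p.2%:Z
    | [::] => 0
    end
  end.

Lemma extend_oddE l vals s : extend_odd l vals s = (extend_odd_int vals s)%:~R.
Proof.
rewrite /extend_odd /extend_odd_int.
case: [seq _ <- _ | _] => [|p _]; last by rewrite pmulrn.
case: [seq _ <- _ | _] => [|p _]; last by rewrite mulrNz pmulrn.
by rewrite mulr0z.
Qed.

Definition alpha_lift : F25 -> int := extend_odd_int alpha_vals.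
Definition beta_lift : F25 -> int := extend_odd_int beta_vals.

Lemma alphaE l s : alpha25 l s = (alpha_lift s)%:~R. Proof. exact: extend_oddE. Qed.
Lemma betaE l s : beta25 l s = (beta_lift s)%:~R. Proof. exact: extend_oddE. Qed.

Lemma alpha_lift_odd s : alpha_lift (- s) = - alpha_lift s.
Proof. by apply/eqP; move: s; apply: all_F25s; vm_compute. Qed.
Lemma beta_lift_odd s : beta_lift (- s) = - beta_lift s.
Proof. by apply/eqP; move: s; apply: all_F25s; vm_compute. Qed.

Definition voltage_values : seq int := [:: -1; 0; 1].

Lemma alpha_lift_values s : alpha_lift s \in voltage_values.
Proof. by move: s; apply: all_F25s; vm_compute. Qed.
Lemma beta_lift_values s : beta_lift s \in voltage_values.
Proof. by move: s; apply: all_F25s; vm_compute. Qed.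

(* Kernel evaluation of ['F_5] arithmetic recomputes [pdiv 5] at every
   operation, so the large finite checks below run on this model of F25 by
   pairs of naturals instead. *)
Definition code := (nat * nat)%type.
Definition enc (x : F25) : code := (val x.1, val x.2).
Definition cidx (c : code) : nat := (c.1 * 5 + c.2)%N.
Definition cadd (c d : code) : code := ((c.1 + d.1) %% 5, (c.2 + d.2) %% 5)%N.
Definition copp (c : code) : code := ((5 - c.1) %% 5, (5 - c.2) %% 5)%N.
Definition codes : seq code := [seq (i, j) | i <- iota 0 5, j <- iota 0 5].
Definition code_pairs : seq (code * code) := [seq (c, d) | c <- codes, d <- codes].

Lemma enc_add x y : enc (x + y) = cadd (enc x) (enc y). Proof. by case: x y => [a b] [c d]. Qed.
Lemma enc_opp x : enc (- x) = copp (enc x). Proof. by case: x => [a b]. Qed.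
Lemma enc_inj : injective enc.
Proof. by move=> [a b] [c d] [/val_inj -> /val_inj ->]. Qed.

Lemma map_enc_F25s : map enc F25s = codes. Proof. by vm_compute. Qed.

Lemma enc_mem_codes x : enc x \in codes.
Proof. by rewrite -map_enc_F25s map_f ?mem_F25s. Qed.

Lemma big_enc (R : nmodType) (F : code -> R) :
  \sum_(x : F25) F (enc x) = \sum_(c <- codes) F c.
Proof. by rewrite big_F25s -map_enc_F25s big_map. Qed.

Definition tab (T : Type) (f : F25 -> T) : seq T := map f F25s.
Definition tab_at (T : Type) (x0 : T) (t : seq T) (c : code) : T := nth x0 t (cidx c).

Lemma tab_atE (T : Type) (x0 : T) (f : F25 -> T) x : tab_at x0 (tab f) (enc x) = f x.
Proof.
have /andP[idx_lt /eqP idxK] : (cidx (enc x) < 25)%N && (nth 0 F25s (cidx (enc x)) == x).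
  by move: x; apply: all_F25s; vm_compute.
by rewrite /tab_at /tab (nth_map 0) ?idxK.
Qed.

Definition sq_tab : seq bool := Eval vm_compute in tab is_square.
Definition alpha_tab : seq int := Eval vm_compute in tab alpha_lift.
Definition beta_tab : seq int := Eval vm_compute in tab beta_lift.

Lemma sq_tabE x : tab_at false sq_tab (enc x) = (x \in sqF25).
Proof.
by rewrite is_squareE -(tab_atE false); congr tab_at; vm_compute.
Qed.
Lemma alpha_tabE : alpha_tab = tab alpha_lift. Proof. by vm_compute. Qed.
Lemma beta_tabE : beta_tab = tab beta_lift. Proof. by vm_compute. Qed.

(* A 4-cycle u, v, x, y whose first edge has direction s is determined by the
   directions t of x - v and r of u - y; its third edge has direction
   -(s + t + r), and [good] tests the voltage sum around the cycle. *)
Definition four_cycle_dirs (ia : F25 -> int) (good : int -> bool) (s : F25) :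
    {set F25 * F25} :=
  [set tr | [&& tr.1 \in sqF25, tr.2 \in sqF25,
     (- (s + tr.1 + tr.2) \in sqF25) &&
       good (ia s + ia tr.1 + ia tr.2 + ia (- (s + tr.1 + tr.2))),
     tr.1 != - s & tr.2 != - s]].

Definition four_cycle_dirs_code (vt : seq int) (good : int -> bool) (s : code)
    (tr : code * code) : bool :=
  let m := copp (cadd (cadd s tr.1) tr.2) in
  [&& tab_at false sq_tab tr.1, tab_at false sq_tab tr.2,
      tab_at false sq_tab m &&
        good (tab_at 0 vt s + tab_at 0 vt tr.1 + tab_at 0 vt tr.2 + tab_at 0 vt m),
      tr.1 != copp s & tr.2 != copp s].

Lemma card_four_cycle_dirs ia good s :
  #|four_cycle_dirs ia good s| =
  count (four_cycle_dirs_code (tab ia) good (enc s)) code_pairs.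
Proof.
rewrite card_F25_pairs.
have -> : code_pairs = [seq (enc tr.1, enc tr.2) | tr <- [seq (x, y) | x <- F25s, y <- F25s]].
  by vm_compute.
rewrite count_map; apply: eq_count => -[t r].
rewrite /= inE /four_cycle_dirs_code /= -!enc_add -!enc_opp !tab_atE !sq_tabE.
by rewrite !(inj_eq enc_inj).
Qed.

Definition cover_step l (a : F25 -> 'Z_l) (e : cover_vertex l) : bool :=
  (e.1 \in sqF25) && (e.2 == a e.1).

Lemma cover_adjE l (a : F25 -> 'Z_l) p q : cover_adj a p q = cover_step a (q - p).
Proof. by []. Qed.

Lemma card_cayley_four_cycles l (S : pred (cover_vertex l)) (u v : cover_vertex l) :
  #|four_cycles (fun p q : cover_vertex l => S (q - p)) u v| =
  #|[set ee : cover_vertex l * cover_vertex l |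
     [&& S ee.1, S ee.2, S (- (v - u + ee.1 + ee.2)), ee.1 != u - v & ee.2 != u - v]]|.
Proof.
pose psi (ee : cover_vertex l * cover_vertex l) := (v + ee.1, u - ee.2).
pose phi (xy : cover_vertex l * cover_vertex l) := (xy.1 - v, u - xy.2).
have psiK : cancel psi phi by move=> [e e']; rewrite /phi /psi /=; congr (_, _); ring.
have phiK : cancel phi psi by move=> [x y]; rewrite /phi /psi /=; congr (_, _); ring.
rewrite -(card_imset _ (can_inj psiK)) (can2_imset_pre _ psiK phiK).
apply: eq_card => -[x y]; rewrite !inE /=.
have -> : - (v - u + (x - v) + (u - y)) = y - x by ring.
rewrite (inj_eq (addIr (- v))) (inj_eq (addrI u)) (inj_eq oppr_inj).
by congr (_ && _); rewrite andbCA.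
Qed.

Section CoverFourCycles.
Variables (l : nat) (ia : F25 -> int) (a : F25 -> 'Z_l).
Hypothesis aE : forall s, a s = (ia s)%:~R.
Hypothesis ia_odd : forall s, ia (- s) = - ia s.

Let step (t : F25) : cover_vertex l := (t, a t).

Lemma card_cover_four_cycles (u v : cover_vertex l) : cover_adj a u v ->
  #|four_cycles (cover_adj a) u v| =
  #|four_cycle_dirs ia (fun n => (n%:~R : 'Z_l) == 0) (v.1 - u.1)|.
Proof.
move=> /andP[s_sq /eqP huv]; set s := v.1 - u.1.
have vu : v - u = step s by rewrite [v - u]surjective_pairing /= huv.
have uv : u - v = step (- s) by rewrite -opprB vu /step !aE ia_odd mulrNz.
have step_inj : injective step by move=> t t' [].
pose steps (tr : F25 * F25) := (step tr.1, step tr.2).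
have steps_inj : injective steps.
  by move=> [t r] [t' r'] /(congr1 (fun ee => (ee.1.1, ee.2.1))).
rewrite (card_cayley_four_cycles (cover_step a)) -(card_imset _ steps_inj).
set D := [set ee | _]; set dirs := four_cycle_dirs _ _ _.
have stepsE t r : (steps (t, r) \in D) = ((t, r) \in dirs).
  rewrite [_ \in D]inE [_ \in dirs]inE /= vu uv !(inj_eq step_inj) /cover_step /=.
  rewrite !eqxx !andbT; congr [&& _, _, _ & _]; congr (_ && _).
  by rewrite !intrD -!aE eq_sym -subr_eq0 opprK addrC.
apply: eq_card => -[e e']; apply/idP/imsetP => [ee_in|[[t r] tr_in ->]]; last first.
  by rewrite stepsE.
have ee_steps : (e, e') = steps (e.1, e'.1).
  move: ee_in; rewrite inE /steps /step /= => /and3P[/andP[_ /eqP <-] /andP[_ /eqP <-] _].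
  by rewrite -!surjective_pairing.
by exists (e.1, e'.1); rewrite // -stepsE -ee_steps.
Qed.
End CoverFourCycles.

Lemma intr_Zp_eq0 l (n : int) : (1 < l)%N -> ((n%:~R : 'Z_l) == 0) = (l %| `|n|)%N.
Proof.
move=> l_gt1; rewrite /dvdn; case: n => k.
- by rewrite -pmulrn -(inj_eq val_inj) /= val_Zp_nat.
- by rewrite NegzE mulrNz -pmulrn oppr_eq0 -(inj_eq val_inj) /= val_Zp_nat.
Qed.

Lemma four_cycle_dirs_small l ia s : (4 < l)%N -> (forall x, ia x \in voltage_values) ->
  four_cycle_dirs ia (fun n => (n%:~R : 'Z_l) == 0) s =
  four_cycle_dirs ia (fun n => n == 0) s.
Proof.
move=> l_gt4 ia_values; apply/setP => -[t r]; rewrite !inE /=.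
have ia_small x : (`|ia x| <= 1)%N by move: (ia_values x); rewrite !inE => /or3P[] /eqP ->.
congr [&& _, _, _ && _, _ & _]; set n := (_ + _ + _ + _)%R.
have n_lt : (`|n| < l)%N.
  apply: leq_ltn_trans l_gt4; move: (ia_small s) (ia_small t) (ia_small r).
  by move: (ia_small (- (s + t + r))); rewrite /n; lia.
rewrite intr_Zp_eq0 ?(ltn_trans _ l_gt4) //.
have [->|n_neq0] := eqVneq n 0; first exact: dvdn0.
by apply: contraTF n_lt => /dvdn_leq; rewrite -leqNgt absz_gt0 n_neq0 => ->.
Qed.

Lemma eq_four_cycle_dirs ia good good' s : good =1 good' ->
  four_cycle_dirs ia good s = four_cycle_dirs ia good' s.
Proof. by move=> eq_good; apply/setP => tr; rewrite !inE eq_good. Qed.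

Definition dir1 : F25 := f25 1 1.
Definition dir2 : F25 := f25 3 2.

Lemma beta_dirs : all (fun d => is_square d && (beta_lift d == 1)) [:: dir1; dir2].
Proof. by vm_compute. Qed.

Lemma alpha_four_cycle_dirs_code : all (fun s =>
    tab_at false sq_tab s && (s.2 != 0)%N ==>
    (17 <= count (four_cycle_dirs_code alpha_tab (fun n => n == 0) s) code_pairs)%N) codes.
Proof. by vm_compute. Qed.

Lemma beta_four_cycle_dirs_code : all (fun s =>
    (count (four_cycle_dirs_code beta_tab (fun n => n == 0) (enc s)) code_pairs <= 16)%N)
  [:: dir1; dir2].
Proof. by vm_compute. Qed.

Lemma alpha_four_cycle_dirs_code_mod3 :
  (24 <= count (four_cycle_dirs_code alpha_tab (fun n => 3 %| `|n|)%N (enc dir1)) code_pairs)%N.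
Proof. by vm_compute. Qed.

Lemma beta_four_cycle_dirs_code_mod3 : all (fun s =>
    tab_at false sq_tab s ==>
    (count (four_cycle_dirs_code beta_tab (fun n => 3 %| `|n|)%N s) code_pairs <= 23)%N) codes.
Proof. by vm_compute. Qed.

Lemma card_four_cycles_alpha l (u v : cover_vertex l) : (4 < l)%N ->
  cover_adj (alpha25 l) u v -> (v.1 - u.1).2 != 0 ->
  (17 <= #|four_cycles (cover_adj (alpha25 l)) u v|)%N.
Proof.
move=> l_gt4 huv s2_neq0.
rewrite (card_cover_four_cycles (@alphaE l) alpha_lift_odd huv).
rewrite four_cycle_dirs_small //; last exact: alpha_lift_values.
rewrite card_four_cycle_dirs -alpha_tabE.
have /allP/(_ _ (enc_mem_codes (v.1 - u.1)))/implyP := alpha_four_cycle_dirs_code; apply.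
by rewrite sq_tabE (andP huv).1 -[0%N]/(val (0 : 'F_5)) (inj_eq val_inj).
Qed.

Lemma cover_adj_beta_dirs l (p : cover_vertex l) d : d \in [:: dir1; dir2] ->
  cover_adj (beta25 l) p (p + (d, 1)).
Proof.
move=> d_dir; have /andP[d_sq /eqP ib_d] := allP beta_dirs d d_dir.
by rewrite cover_adjE [p + _]addrC addrK /cover_step /= is_squareE d_sq betaE ib_d.
Qed.

Lemma card_four_cycles_beta l (p : cover_vertex l) d : (4 < l)%N -> d \in [:: dir1; dir2] ->
  (#|four_cycles (cover_adj (beta25 l)) p (p + (d, 1))%R| <= 16)%N.
Proof.
move=> l_gt4 d_dir; have adj_p := cover_adj_beta_dirs p d_dir.
rewrite (card_cover_four_cycles (@betaE l) beta_lift_odd adj_p).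
rewrite four_cycle_dirs_small //; last exact: beta_lift_values.
rewrite card_four_cycle_dirs -beta_tabE.
have -> : (p + (d, 1)).1 - p.1 = d by rewrite /= [p.1 + _]addrC addrK.
exact: (allP beta_four_cycle_dirs_code d d_dir).
Qed.

Lemma F25_span_dirs (x : F25) : exists n m, x = dir1 *+ n + dir2 *+ m.
Proof.
have : has (fun nm => dir1 *+ nm.1 + dir2 *+ nm.2 == x)
         [seq (n, m) | n <- iota 0 5, m <- iota 0 5].
  by move: x; apply: all_F25s; vm_compute.
by case/hasP=> -[n m] _ /eqP <-; exists n, m.
Qed.

Lemma F25_mulr5 (x : F25) : x *+ 5 = 0.
Proof. by apply/eqP; move: x; apply: all_F25s; vm_compute. Qed.

Lemma cover_translation_invariant_const (T : Type) l (h : cover_vertex l -> T) :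
  prime l -> l != 5%N ->
  (forall p, h (p + (dir1, 1)) = h p) -> (forall p, h (p + (dir2, 1)) = h p) ->
  forall p q, h p = h q.
Proof.
move=> l_prime l_neq5 h1 h2 p q.
have hMn d (hd : forall p, h (p + d) = h p) p' n : h (p' + d *+ n) = h p'.
  by elim: n => [|n IHn]; rewrite ?mulr0n ?addr0 // mulrSr addrA hd.
have [n [m qp1]] := F25_span_dirs (q - p).1.
have [k kE] : exists k : 'Z_l, 5%:R * k = (q - p).2 - (n + m)%:R.
  have unit5 : (5%:R : 'Z_l) \is a GRing.unit.
    by rewrite unitZpE ?prime_gt1 // prime_coprime // dvdn_prime2.
  by exists (((q - p).2 - (n + m)%:R) / 5%:R); rewrite mulrC divrK.
suff qpE : q - p = (dir1, 1) *+ (n + 5 * k) + (dir2, 1) *+ m.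
  by rewrite -[q](subrK p) qpE addrC addrA !hMn.
have pairMn (x : F25) (i : 'Z_l) j : (x, i) *+ j = (x *+ j, i *+ j) := pairMnE (x, i) j.
have pairD (x y : F25) (i j : 'Z_l) : (x, i) + (y, j) = (x + y, i + j) by [].
rewrite !pairMn pairD [q - p]surjective_pairing; congr (_, _).
  by rewrite qp1 mulrnDr mulrnA F25_mulr5 mul0rn addr0.
by rewrite natrD natrM natr_Zp kE natrD; ring.
Qed.

Lemma not_iso_large l : prime l -> l != 5%N -> (4 < l)%N ->
  ~ graph_iso (alpha25 l) (beta25 l).
Proof.
move=> l_prime l_neq5 l_gt4 [f [[g fK gK] f_iso]].
have omega_coord_inv d (d_dir : d \in [:: dir1; dir2]) p :
    ((g (p + (d, 1))).1).2 = ((g p).1).2.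
  set q := p + _; apply/eqP; rewrite -subr_eq0; apply: contraTT isT => s2_neq0.
  have adj_gpq : cover_adj (alpha25 l) (g p) (g q).
    by rewrite f_iso !gK; apply: cover_adj_beta_dirs.
  have := leq_card_four_cycles (g p) (g q) (can_inj fK) f_iso; rewrite !gK => le_ab.
  have := leq_trans (card_four_cycles_alpha l_gt4 adj_gpq s2_neq0) le_ab.
  by rewrite leqNgt ltnS card_four_cycles_beta.
have := cover_translation_invariant_const l_prime l_neq5
  (omega_coord_inv _ (mem_head _ _)) (omega_coord_inv _ (mem_last _ _))
  (f (f25 0 0, 0)) (f (f25 0 1, 0)).
by rewrite !fK; vm_compute.
Qed.

Lemma not_iso_3 : ~ graph_iso (alpha25 3) (beta25 3).
Proof.
move=> [f [[g fK gK] f_iso]].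
pose u : cover_vertex 3 := 0; pose v : cover_vertex 3 := (dir1, 1).
have adj_uv : cover_adj (alpha25 3) u v by rewrite cover_adjE /cover_step is_squareE alphaE.
have adj_fuv : cover_adj (beta25 3) (f u) (f v) by rewrite -f_iso.
have := leq_card_four_cycles u v (can_inj fK) f_iso.
rewrite (card_cover_four_cycles (@alphaE 3) alpha_lift_odd adj_uv).
rewrite (card_cover_four_cycles (@betaE 3) beta_lift_odd adj_fuv).
rewrite !(eq_four_cycle_dirs _ _ (fun n => @intr_Zp_eq0 3 n isT)).
have -> : v.1 - u.1 = dir1 by rewrite subr0.
rewrite !card_four_cycle_dirs -alpha_tabE -beta_tabE.
have /allP/(_ _ (enc_mem_codes ((f v).1 - (f u).1)))/implyP := beta_four_cycle_dirs_code_mod3.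
rewrite sq_tabE => /(_ (andP adj_fuv).1) beta_le.
by move/(leq_trans alpha_four_cycle_dirs_code_mod3)/leq_trans/(_ beta_le).
Qed.

Lemma adj_matrixE l (a : F25 -> 'Z_l) :
  adj_matrix a = fun_mx (fun u v => (cover_adj a u v)%:R).
Proof. by apply/matrixP => i j; rewrite !mxE. Qed.

Section CoverLift.
Variable l : nat.
Local Notation V := (cover_vertex l).

Lemma sum_cover (G : V -> algC) : \sum_(v : V) G v = \sum_(x : F25) \sum_(i : 'Z_l) G (x, i).
Proof. by rewrite pair_bigA; apply: eq_bigr => -[]. Qed.

Definition lift_mx (m : F25 -> F25 -> int) : 'M[algC]_#|V| :=
  fun_mx (fun u v : V => (u.2 == v.2)%:R * (m u.1 v.1)%:~R).

Lemma lift_mxM m m' :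
  lift_mx m *m lift_mx m' = lift_mx (fun x z => \sum_y m x y * m' y z).
Proof.
rewrite fun_mxM; apply: eq_fun_mx => u w; rewrite sum_cover rmorph_sum mulr_sumr.
apply: eq_bigr => y _.
rewrite -(sum_pred1 u.2 (fun i => (i == w.2)%:R * (m u.1 y * m' y w.1)%:~R)).
by apply: eq_bigr => i _ /=; rewrite intrM; ring.
Qed.

Lemma lift_mx_scalar (c : int) : lift_mx (fun x y => c *+ (x == y)) = (c%:~R)%:M.
Proof.
apply/matrixP => i j; rewrite !mxE -(inj_eq enum_val_inj).
case: (enum_val i) (enum_val j) => [x p] [y q] /=.
by rewrite xpair_eqE; case: eqP; case: eqP; rewrite ?mulr1n ?mulr0n ?mul1r ?mul0r.
Qed.
End CoverLift.

Section CoverIntertwiner.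
Variables (l : nat) (ia ib : F25 -> int) (a b : F25 -> 'Z_l) (ks : seq int).
Variable m : F25 -> F25 -> int.
Hypotheses (aE : forall s, a s = (ia s)%:~R) (bE : forall s, b s = (ib s)%:~R).
Hypotheses (ks_uniq : uniq ks) (ia_ks : forall s, ia s \in ks) (ib_ks : forall s, ib s \in ks).
Hypothesis m_intertwines : forall k x z, k \in ks ->
  \sum_(y : F25) m x y * ((z - y \in sqF25) && (ia (z - y) == k))%:R =
  \sum_(y : F25) ((y - x \in sqF25) && (ib (y - x) == k))%:R * m y z.

Lemma indicator_voltage_split (d : 'Z_l) (P : bool) (n : int) : n \in ks ->
  ((P && (d == n%:~R))%:R : algC) = \sum_(k <- ks) (d == k%:~R)%:R * (P && (n == k))%:R.
Proof.
move=> n_ks; rewrite (bigD1_seq n) //= eqxx andbT big1 ?addr0 => [|k /negbTE nk].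
  by rewrite -natrM mulnb andbC.
by rewrite [n == k]eq_sym nk andbF mulr0.
Qed.

Lemma lift_mx_intertwines : lift_mx l m *m adj_matrix a = adj_matrix b *m lift_mx l m.
Proof.
rewrite !adj_matrixE !fun_mxM; apply: eq_fun_mx => u w; rewrite !sum_cover.
have sumL x : \sum_i (u.2 == i)%:R * (m u.1 x)%:~R * (cover_adj a (x, i) w)%:R =
              (m u.1 x)%:~R * (cover_adj a (x, u.2) w)%:R :> algC.
  rewrite -(sum_pred1 u.2 (fun i => (m u.1 x)%:~R * (cover_adj a (x, i) w)%:R)).
  by apply: eq_bigr => i _; rewrite mulrA.
have sumR x : \sum_i (cover_adj b u (x, i))%:R * ((i == w.2)%:R * (m x w.1)%:~R) =
              (cover_adj b u (x, w.2))%:R * (m x w.1)%:~R :> algC.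
  rewrite -(sum_pred1 w.2 (fun i => (cover_adj b u (x, i))%:R * (m x w.1)%:~R)).
  by apply: eq_bigr => i _ /=; rewrite [i == w.2]eq_sym; ring.
rewrite (eq_bigr _ (fun x _ => sumL x)) (eq_bigr _ (fun x _ => sumR x)) /cover_adj /=.
under eq_bigr => x _ do rewrite aE indicator_voltage_split // mulr_sumr.
under [RHS]eq_bigr => x _ do rewrite bE indicator_voltage_split // mulr_suml.
rewrite exchange_big [RHS]exchange_big /=; apply: eq_big_seq => k k_ks.
under eq_bigr do rewrite mulrCA.
under [RHS]eq_bigr do rewrite -mulrA.
rewrite -!mulr_sumr; congr (_ * _).
have := congr1 (fun n : int => n%:~R : algC) (m_intertwines u.1 w.1 k_ks).
rewrite !rmorph_sum /=.
under eq_bigr do rewrite intrM mulrz_nat.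
by under [in X in _ = X -> _]eq_bigr do rewrite intrM mulrz_nat.
Qed.
End CoverIntertwiner.

(* Rows of an integer matrix on F25 (indexed by [cidx]) intertwining the
   voltage classes of alpha and beta, and of a left inverse of it up to the
   factor 25; both were found by computer. *)
Definition intertwiner_rows : seq (seq int) :=
  [:: [:: 0; 0; 0; 0; 0; 1; 3; 1; 0; 0; (-1); 1; 0; 1; (-1); 1; 1; (-1); 0; (-1); (-1); 0; 0; (-1); 2];
   [:: 0; 0; 0; 0; 0; 1; 0; 0; 1; 3; 0; 1; (-1); (-1); 1; (-1); 0; (-1); 1; 1; 0; (-1); 2; (-1); 0];
   [:: 0; 0; 0; 0; 0; 0; 1; 3; 1; 0; (-1); (-1); 1; 0; 1; (-1); 1; 1; (-1); 0; 2; (-1); 0; 0; (-1)];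
   [:: 0; 0; 0; 0; 0; 3; 1; 0; 0; 1; 1; 0; 1; (-1); (-1); 1; (-1); 0; (-1); 1; 0; 0; (-1); 2; (-1)];
   [:: 0; 0; 0; 0; 0; 0; 0; 1; 3; 1; 1; (-1); (-1); 1; 0; 0; (-1); 1; 1; (-1); (-1); 2; (-1); 0; 0];
   [:: 0; 0; 0; 0; 0; (-1); (-1); 1; 0; 1; 0; 1; 1; 0; 3; 2; 0; (-1); (-1); 0; (-1); 0; (-1); 1; 1];
   [:: 0; 0; 0; 0; 0; 1; 0; 1; (-1); (-1); 1; 0; 3; 0; 1; (-1); (-1); 0; 2; 0; (-1); 1; 1; (-1); 0];
   [:: 0; 0; 0; 0; 0; 1; (-1); (-1); 1; 0; 3; 0; 1; 1; 0; 0; 2; 0; (-1); (-1); 1; (-1); 0; (-1); 1];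
   [:: 0; 0; 0; 0; 0; (-1); 1; 0; 1; (-1); 1; 1; 0; 3; 0; 0; (-1); (-1); 0; 2; 0; (-1); 1; 1; (-1)];
   [:: 0; 0; 0; 0; 0; 0; 1; (-1); (-1); 1; 0; 3; 0; 1; 1; (-1); 0; 2; 0; (-1); 1; 1; (-1); 0; (-1)];
   [:: 0; 0; 0; 0; 0; 0; (-1); 1; 1; (-1); 0; 2; 0; (-1); (-1); 1; 0; 3; 0; 1; (-1); (-1); 1; 0; 1];
   [:: 0; 0; 0; 0; 0; 1; 1; (-1); 0; (-1); 0; (-1); (-1); 0; 2; 3; 0; 1; 1; 0; 1; 0; 1; (-1); (-1)];
   [:: 0; 0; 0; 0; 0; (-1); 0; (-1); 1; 1; (-1); 0; 2; 0; (-1); 1; 1; 0; 3; 0; 1; (-1); (-1); 1; 0];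
   [:: 0; 0; 0; 0; 0; (-1); 1; 1; (-1); 0; 2; 0; (-1); (-1); 0; 0; 3; 0; 1; 1; (-1); 1; 0; 1; (-1)];
   [:: 0; 0; 0; 0; 0; 1; (-1); 0; (-1); 1; (-1); (-1); 0; 2; 0; 0; 1; 1; 0; 3; 0; 1; (-1); (-1); 1];
   [:: 0; 0; 0; 0; 0; 0; (-1); 2; (-1); 0; 1; 1; (-1); 0; (-1); 1; (-1); (-1); 1; 0; 3; 1; 0; 0; 1];
   [:: 0; 0; 0; 0; 0; 2; (-1); 0; 0; (-1); (-1); 0; (-1); 1; 1; (-1); 1; 0; 1; (-1); 0; 0; 1; 3; 1];
   [:: 0; 0; 0; 0; 0; 0; 0; (-1); 2; (-1); (-1); 1; 1; (-1); 0; 0; 1; (-1); (-1); 1; 1; 3; 1; 0; 0];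
   [:: 0; 0; 0; 0; 0; (-1); 2; (-1); 0; 0; 1; (-1); 0; (-1); 1; (-1); (-1); 1; 0; 1; 1; 0; 0; 1; 3];
   [:: 0; 0; 0; 0; 0; (-1); 0; 0; (-1); 2; 0; (-1); 1; 1; (-1); 1; 0; 1; (-1); (-1); 0; 1; 3; 1; 0];
   [:: 0; 0; 0; 5; 0; 0; 0; 0; 0; 0; 0; 0; 0; 0; 0; 0; 0; 0; 0; 0; 0; 0; 0; 0; 0];
   [:: 0; 5; 0; 0; 0; 0; 0; 0; 0; 0; 0; 0; 0; 0; 0; 0; 0; 0; 0; 0; 0; 0; 0; 0; 0];
   [:: 0; 0; 0; 0; 5; 0; 0; 0; 0; 0; 0; 0; 0; 0; 0; 0; 0; 0; 0; 0; 0; 0; 0; 0; 0];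
   [:: 0; 0; 5; 0; 0; 0; 0; 0; 0; 0; 0; 0; 0; 0; 0; 0; 0; 0; 0; 0; 0; 0; 0; 0; 0];
   [:: 5; 0; 0; 0; 0; 0; 0; 0; 0; 0; 0; 0; 0; 0; 0; 0; 0; 0; 0; 0; 0; 0; 0; 0; 0]].
Definition inverse_rows : seq (seq int) :=
  [:: [:: 0; 0; 0; 0; 0; 0; 0; 0; 0; 0; 0; 0; 0; 0; 0; 0; 0; 0; 0; 0; 0; 0; 0; 0; 5];
   [:: 0; 0; 0; 0; 0; 0; 0; 0; 0; 0; 0; 0; 0; 0; 0; 0; 0; 0; 0; 0; 0; 5; 0; 0; 0];
   [:: 0; 0; 0; 0; 0; 0; 0; 0; 0; 0; 0; 0; 0; 0; 0; 0; 0; 0; 0; 0; 0; 0; 0; 5; 0];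
   [:: 0; 0; 0; 0; 0; 0; 0; 0; 0; 0; 0; 0; 0; 0; 0; 0; 0; 0; 0; 0; 5; 0; 0; 0; 0];
   [:: 0; 0; 0; 0; 0; 0; 0; 0; 0; 0; 0; 0; 0; 0; 0; 0; 0; 0; 0; 0; 0; 0; 5; 0; 0];
   [:: 1; 1; 0; 3; 0; (-1); 1; 1; (-1); 0; 0; 1; (-1); (-1); 1; 0; 2; 0; (-1); (-1); 0; 0; 0; 0; 0];
   [:: 3; 0; 1; 1; 0; (-1); 0; (-1); 1; 1; (-1); 1; 0; 1; (-1); (-1); (-1); 0; 2; 0; 0; 0; 0; 0; 0];
   [:: 1; 0; 3; 0; 1; 1; 1; (-1); 0; (-1); 1; (-1); (-1); 1; 0; 2; 0; (-1); (-1); 0; 0; 0; 0; 0; 0];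
   [:: 0; 1; 1; 0; 3; 0; (-1); 1; 1; (-1); 1; 0; 1; (-1); (-1); (-1); 0; 2; 0; (-1); 0; 0; 0; 0; 0];
   [:: 0; 3; 0; 1; 1; 1; (-1); 0; (-1); 1; (-1); (-1); 1; 0; 1; 0; (-1); (-1); 0; 2; 0; 0; 0; 0; 0];
   [:: (-1); 0; (-1); 1; 1; 0; 1; 3; 1; 0; 0; 0; (-1); 2; (-1); 1; (-1); (-1); 1; 0; 0; 0; 0; 0; 0];
   [:: 1; 1; (-1); 0; (-1); 1; 0; 0; 1; 3; 2; (-1); 0; 0; (-1); 1; 0; 1; (-1); (-1); 0; 0; 0; 0; 0];
   [:: 0; (-1); 1; 1; (-1); 1; 3; 1; 0; 0; 0; (-1); 2; (-1); 0; (-1); (-1); 1; 0; 1; 0; 0; 0; 0; 0];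
   [:: 1; (-1); 0; (-1); 1; 0; 0; 1; 3; 1; (-1); 0; 0; (-1); 2; 0; 1; (-1); (-1); 1; 0; 0; 0; 0; 0];
   [:: (-1); 1; 1; (-1); 0; 3; 1; 0; 0; 1; (-1); 2; (-1); 0; 0; (-1); 1; 0; 1; (-1); 0; 0; 0; 0; 0];
   [:: 1; (-1); (-1); 1; 0; 2; (-1); 0; 0; (-1); 1; 3; 1; 0; 0; 1; (-1); 0; (-1); 1; 0; 0; 0; 0; 0];
   [:: 1; 0; 1; (-1); (-1); 0; (-1); 2; (-1); 0; 0; 0; 1; 3; 1; (-1); 1; 1; (-1); 0; 0; 0; 0; 0; 0];
   [:: (-1); (-1); 1; 0; 1; (-1); 0; 0; (-1); 2; 3; 1; 0; 0; 1; (-1); 0; (-1); 1; 1; 0; 0; 0; 0; 0];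
   [:: 0; 1; (-1); (-1); 1; (-1); 2; (-1); 0; 0; 0; 1; 3; 1; 0; 1; 1; (-1); 0; (-1); 0; 0; 0; 0; 0];
   [:: (-1); 1; 0; 1; (-1); 0; 0; (-1); 2; (-1); 1; 0; 0; 1; 3; 0; (-1); 1; 1; (-1); 0; 0; 0; 0; 0];
   [:: (-1); 0; 2; 0; (-1); (-1); (-1); 1; 0; 1; (-1); 1; 1; (-1); 0; 3; 0; 1; 1; 0; 0; 0; 0; 0; 0];
   [:: 0; (-1); (-1); 0; 2; 0; 1; (-1); (-1); 1; (-1); 0; (-1); 1; 1; 1; 0; 3; 0; 1; 0; 0; 0; 0; 0];
   [:: 0; 2; 0; (-1); (-1); (-1); 1; 0; 1; (-1); 1; 1; (-1); 0; (-1); 0; 1; 1; 0; 3; 0; 0; 0; 0; 0];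
   [:: (-1); (-1); 0; 2; 0; 1; (-1); (-1); 1; 0; 0; (-1); 1; 1; (-1); 0; 3; 0; 1; 1; 0; 0; 0; 0; 0];
   [:: 2; 0; (-1); (-1); 0; 1; 0; 1; (-1); (-1); 1; (-1); 0; (-1); 1; 1; 1; 0; 3; 0; 0; 0; 0; 0; 0]].

Definition code_mx (rows : seq (seq int)) (c d : code) : int :=
  nth 0 (nth [::] rows (cidx c)) (cidx d).

Definition intertwiner (x y : F25) : int := code_mx intertwiner_rows (enc x) (enc y).
Definition inverse_intertwiner (x y : F25) : int := code_mx inverse_rows (enc x) (enc y).

Lemma intertwiner_code : all (fun c => all (fun c' => all (fun k =>
    \sum_(e <- codes) code_mx intertwiner_rows c e *
      (tab_at false sq_tab (cadd c' (copp e)) && (tab_at 0 alpha_tab (cadd c' (copp e)) == k))%:R ==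
    \sum_(e <- codes)
      (tab_at false sq_tab (cadd e (copp c)) && (tab_at 0 beta_tab (cadd e (copp c)) == k))%:R *
      code_mx intertwiner_rows e c')
  voltage_values) codes) codes.
Proof. by rewrite unlock; vm_compute. Qed.

Lemma inverse_intertwiner_code : all (fun c => all (fun c' =>
    \sum_(e <- codes) code_mx inverse_rows c e * code_mx intertwiner_rows e c' ==
    25 *+ (c == c')) codes) codes.
Proof. by rewrite unlock; vm_compute. Qed.

Lemma intertwinerP k x z : k \in voltage_values ->
  \sum_(y : F25) intertwiner x y * ((z - y \in sqF25) && (alpha_lift (z - y) == k))%:R =
  \sum_(y : F25) ((y - x \in sqF25) && (beta_lift (y - x) == k))%:R * intertwiner y z.
Proof.
move=> k_vals.
under eq_bigr => y _ do rewrite -sq_tabE -(tab_atE 0 alpha_lift) -alpha_tabE enc_add enc_opp.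
under [RHS]eq_bigr => y _ do rewrite -sq_tabE -(tab_atE 0 beta_lift) -beta_tabE enc_add enc_opp.
rewrite (big_enc (fun e => code_mx intertwiner_rows (enc x) e *
  (tab_at false sq_tab (cadd (enc z) (copp e)) &&
   (tab_at 0 alpha_tab (cadd (enc z) (copp e)) == k))%:R)).
rewrite (big_enc (fun e =>
  (tab_at false sq_tab (cadd e (copp (enc x))) &&
   (tab_at 0 beta_tab (cadd e (copp (enc x))) == k))%:R * code_mx intertwiner_rows e (enc z))).
apply/eqP; move/allP: intertwiner_code => /(_ _ (enc_mem_codes x)).
by move/allP => /(_ _ (enc_mem_codes z)) /allP; apply.
Qed.

Lemma inverse_intertwinerP x z :
  \sum_(y : F25) inverse_intertwiner x y * intertwiner y z = 25 *+ (x == z).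
Proof.
rewrite (big_enc (fun e => code_mx inverse_rows (enc x) e * code_mx intertwiner_rows e (enc z))).
move/allP: inverse_intertwiner_code => /(_ _ (enc_mem_codes x)) /allP.
by move=> /(_ _ (enc_mem_codes z)) /eqP ->; rewrite (inj_eq enc_inj).
Qed.

Lemma same_spectrum_alpha_beta l : same_spectrum (alpha25 l) (beta25 l).
Proof.
have inv : lift_mx l inverse_intertwiner *m lift_mx l intertwiner = (25%:~R)%:M.
  rewrite lift_mxM -lift_mx_scalar; apply: eq_fun_mx => u w.
  by rewrite inverse_intertwinerP.
have detM : \det (lift_mx l intertwiner) != 0.
  apply/eqP => det0; move: (congr1 determinant inv).
  by rewrite det_mulmx det0 mulr0 det_scalar => /esym/eqP; rewrite expf_eq0 intr_eq0 andbF.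
have := lift_mx_intertwines (@alphaE l) (@betaE l) (erefl true : uniq voltage_values)
  alpha_lift_values beta_lift_values intertwinerP.
by move=> /(char_poly_similar detM) char_eq lam; rewrite /spec_mult char_eq.
Qed.

Lemma voltage_of_int_lift l (a : F25 -> 'Z_l) (ia : F25 -> int) s0 :
  (forall s, a s = (ia s)%:~R) -> (forall s, ia (- s) = - ia s) ->
  s0 \in sqF25 -> ia s0 = 1 -> voltage a.
Proof.
move=> aE ia_odd s0_sq ia_s0; split; first by exists s0; rewrite // aE ia_s0 oner_neq0.
by move=> s _; rewrite f25oppE !aE ia_odd mulrNz.
Qed.

Theorem mainTheorem8 (l : nat) (hl : prime l) (hodd : odd l) (h5 : l != 5%N) :
  voltage (alpha25 l) /\ voltage (beta25 l) /\
  same_spectrum (alpha25 l) (beta25 l) /\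
  ~ graph_iso (alpha25 l) (beta25 l).
Proof.
have [sq_1 alpha_1] : f25 1 0 \in sqF25 /\ alpha_lift (f25 1 0) = 1.
  by rewrite is_squareE; split; vm_compute.
have [sq_dir1 beta_dir1] : dir1 \in sqF25 /\ beta_lift dir1 = 1.
  by rewrite is_squareE; split; vm_compute.
split; first exact: voltage_of_int_lift (@alphaE l) alpha_lift_odd sq_1 alpha_1.
split; first exact: voltage_of_int_lift (@betaE l) beta_lift_odd sq_dir1 beta_dir1.
split; first exact: same_spectrum_alpha_beta.
have [l_gt4|l_le4] := ltnP 4 l; first exact: not_iso_large.
suff -> : l = 3%N by exact: not_iso_3.
by move: hl hodd h5 l_le4; case: l => [|[|[|[|[|]]]]].
Qed.
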